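(* Let $H=(V,E,w)$ be a hypergraph and $f\in\mathbb{R}^n$ with $\|f\|_w>0$. Then $D(f)=R_{J_H}(f)$, where $$D(f)=\frac{\sum_{e\in E}w(e)\Delta_f(e)^2}{\sum_{v\in V}\deg(v)f(v)^2},\qquad R_{J_H}(f)=\frac{f^\top J_H f}{\|f\|_w^2}.$$
   Context: A hypergraph $H=(V,E,w)$ has vertex set $V$ with $|V|=n$, hyperedges $E$ (subsets of $V$), weights $w:E\to\mathbb{R}_{>0}$; $\deg(v)=\sum_{e\ni v}w(e)$, $D_H=\mathrm{diag}(\deg(v))$, $\|g\|_w^2=g^\top D_H g$. For $f\in\mathbb{R}^n$, $e\in E$: $\Delta_f(e)=\max_{u\in e}f(u)+\min_{v\in e}f(v)$, $S_f(e)=\{v\in e:f(v)=\max_{u\in e}f(u)\}$, $I_f(e)=\{v\in e:f(v)=\min_{u\in e}f(u)\}$. Operator $J_H$: for $f$, let $r\in\mathbb{R}^n$ be the unique vector for which there are numbers $r_e(v)$ with $r(v)=\sum_e r_e(v)$, $r_e(v)=0$ unless $v\in S_f(e)\cup I_f(e)$, and: (1) $\sum_{v\in S_f(e)}\deg(v)r_e(v)=\sum_{v\in I_f(e)}\deg(v)r_e(v)=-w(e)\Delta_f(e)$ for all $e$; (2a) if $|r_e(u)|>0$, $u\in S_f(e)$: when $\Delta_f(e)>0$, $r(u)=\max_{v\in S_f(e)}r(v)$, when $\Delta_f(e)<0$, $r(u)=r(v)$ for all $v\in S_f(e)$; (2b) if $|r_e(u)|>0$, $u\in I_f(e)$: when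 $\Delta_f(e)<0$, $r(u)=\min_{v\in I_f(e)}r(v)$, when $\Delta_f(e)>0$, $r(u)=r(v)$ for all $v\in I_f(e)$. Then $J_H f:=-D_H r$. *)

(* Hypergraph H = (V, E, w): V a finite type of vertices,
   E : {set {set V}} the hyperedges, w : {set V} -> R the weights (only their
   values on E matter; positivity on E is a hypothesis of the theorem). *)
From HB Require Import structures.
From mathcomp Require Import all_boot all_order all_algebra.
Set Implicit Arguments. Unset Strict Implicit. Unset Printing Implicit Defensive.
Import Order.TTheory GRing.Theory Num.Theory.
Local Open Scope ring_scope.

Section Hyper.
Variables (R : realFieldType) (V : finType).
Variables (E : {set {set V}}) (w : {set V} -> R).

Definition hdeg (v : V) : R := \sum_(e in E | v \in e) w e.

Definition wnorm2 (g : V -> R) : R := \sum_(v : V) hdeg v * g v ^+ 2.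

Definition emax (f : V -> R) (e : {set V}) : R :=
  match [pick v in e | [forall u in e, f u <= f v]] with
  | Some v => f v | None => 0 end.
Definition emin (f : V -> R) (e : {set V}) : R :=
  match [pick v in e | [forall u in e, f v <= f u]] with
  | Some v => f v | None => 0 end.

Definition Delta (f : V -> R) (e : {set V}) : R := emax f e + emin f e.
Definition Sset (f : V -> R) (e : {set V}) : {set V} := [set v in e | f v == emax f e].
Definition Iset (f : V -> R) (e : {set V}) : {set V} := [set v in e | f v == emin f e].

Definition Dquot (f : V -> R) : R :=
  (\sum_(e in E) w e * Delta f e ^+ 2) / wnorm2 f.

(* r is the vector associated to f in the definition of J_H.  The edge
   contributions r_e are split into a part rS e supported on S_f(e) and a
   part rI e supported on I_f(e). *)
Definition Jr_spec (f r : V -> R) : Prop :=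
  exists rS rI : {set V} -> V -> R,
  [/\ forall v, r v = \sum_(e in E) (rS e v + rI e v),
      forall e, e \in E -> forall v, v \notin Sset f e -> rS e v = 0,
      forall e, e \in E -> forall v, v \notin Iset f e -> rI e v = 0,
      forall e, e \in E ->
        \sum_(v in Sset f e) hdeg v * rS e v = - (w e * Delta f e) /\
        \sum_(v in Iset f e) hdeg v * rI e v = - (w e * Delta f e) &
      forall e, e \in E -> forall u, u \in Sset f e -> rS e u != 0 ->
        (0 < Delta f e -> forall v, v \in Sset f e -> r v <= r u) /\
        (Delta f e < 0 -> forall v, v \in Sset f e -> r u = r v) ] /\
      (forall e, e \in E -> forall u, u \in Iset f e -> rI e u != 0 ->
        (Delta f e < 0 -> forall v, v \in Iset f e -> r u <= r v) /\
        (0 < Delta f e -> forall v, v \in Iset f e -> r u = r v)).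

(* J_H f = - D_H r *)
Definition JH (r : V -> R) : V -> R := fun v => - (hdeg v * r v).

Definition RJ (f r : V -> R) : R :=
  (\sum_(v : V) f v * JH r v) / wnorm2 f.

End Hyper.

From HB Require Import structures.
From mathcomp Require Import all_boot all_order all_algebra.
From mathcomp Require Import ring.
Import Order.TTheory GRing.Theory Num.Theory.
Local Open Scope ring_scope.

(* Both quotients have the denominator ||f||_w^2, so only the numerators
   must agree, and for these condition (1) of the definition of J_H suffices:
   the part of r_e supported on S_f(e) only sees the value max_e f of f, the
   part supported on I_f(e) only sees min_e f, and each part has D_H-mass
   -w(e) Delta_f(e).  Hence the edge e contributes w(e) Delta_f(e)^2 to
   f^T J_H f. *)

Lemma big_supp_const_mul {R : comPzRingType} {V : finType} {S : {set V}}
    (d : V -> R) {g f : V -> R} {c : R} :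
    (forall v, v \notin S -> g v = 0) -> (forall v, v \in S -> f v = c) ->
  \sum_v d v * g v * f v = c * \sum_(v in S) d v * g v.
Proof.
move=> g0 fc; rewrite (bigID (mem S)) /= [X in _ + X]big1 ?addr0; last first.
  by move=> v /g0 ->; rewrite mulr0 mul0r.
by rewrite mulr_sumr; apply: eq_bigr => v /fc ->; rewrite mulrC.
Qed.

Lemma edge_quadratic_form {R : realFieldType} {V : finType}
    (E : {set {set V}}) (w : {set V} -> R) {f : V -> R} {e : {set V}}
    {rS rI : V -> R} :
    (forall v, v \notin Sset f e -> rS v = 0) ->
    (forall v, v \notin Iset f e -> rI v = 0) ->
    \sum_(v in Sset f e) hdeg E w v * rS v = - (w e * Delta f e) ->
    \sum_(v in Iset f e) hdeg E w v * rI v = - (w e * Delta f e) ->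
  \sum_v hdeg E w v * (rS v + rI v) * f v = - (w e * Delta f e ^+ 2).
Proof.
move=> rS0 rI0 massS massI.
have fS v : v \in Sset f e -> f v = emax f e by rewrite inE => /andP[_ /eqP].
have fI v : v \in Iset f e -> f v = emin f e by rewrite inE => /andP[_ /eqP].
under eq_bigr do rewrite mulrDr mulrDl.
rewrite big_split /= (big_supp_const_mul _ rS0 fS) (big_supp_const_mul _ rI0 fI).
by rewrite massS massI /Delta; ring.
Qed.

Theorem lemma10 (R : realFieldType) (V : finType)
  (E : {set {set V}}) (w : {set V} -> R)
  (hw : forall e, e \in E -> 0 < w e)
  (hne : forall e, e \in E -> e != set0)
  (f r : V -> R)
  (hf : 0 < wnorm2 E w f)
  (hr : Jr_spec E w f r) :
  Dquot E w f = RJ E w f r.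
Proof.
case: hr => rS [rI [[r_sum rS0 rI0 mass _] _]].
rewrite /Dquot /RJ /JH; congr (_ / _).
have edge e : e \in E ->
    \sum_v hdeg E w v * (rS e v + rI e v) * f v = - (w e * Delta f e ^+ 2).
  by move=> eE; case: (mass e eE); apply: edge_quadratic_form (rS0 e eE) (rI0 e eE).
rewrite -[LHS]opprK -sumrN.
under eq_bigr => e eE do rewrite -edge //.
rewrite exchange_big /= -sumrN; apply: eq_bigr => v _.
by rewrite r_sum mulr_sumr mulrN [f v * _]mulrC mulr_suml.
Qed.
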